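(* Fix an integer $d \geq 1$. Consider the multiobjective $0$--$1$ knapsack problem with $n$ objects, feasible set $\{0,1\}^n$, weight vector $w = (1, \dots, 1) \in \mathbb{R}^n$ (to be minimized), and $d$ profit vectors $v^{(1)}, \dots, v^{(d)} \in \mathbb{R}^n$ (to be maximized), where all profit entries $v^{(i)}_j$ are chosen independently and uniformly at random from $[0,1]$. Then the expected number of Pareto-optimal solutions is $\Omega_d(n^{d-1.5})$, where the constant in $\Omega_d$ may depend on $d$ but not on $n$.
   Context: In the knapsack problem, for $x, y \in \{0,1\}^n$, $y$ dominates $x$ if $w \cdot y \leq w \cdot x$ and $v^{(i)} \cdot y \geq v^{(i)} \cdot x$ for all $i \in [d]$, with at least one of these $d+1$ inequalities strict. A feasible solution $x$ is Pareto-optimal if no feasible $y$ dominates it. *)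

From HB Require Import structures.
From mathcomp Require Import all_boot all_order all_algebra.
From mathcomp Require Import all_classical all_reals all_analysis.
Set Implicit Arguments. Unset Strict Implicit. Unset Printing Implicit Defensive.
Import Order.TTheory GRing.Theory Num.Theory.
Local Open Scope classical_set_scope.
Local Open Scope ring_scope.

Section knapsack.
Variables (R : realType) (d n : nat).

Definition dotb (c : 'I_n -> R) (x : {ffun 'I_n -> bool}) : R :=
  \sum_(j < n) c j * (x j)%:R.

Definition dominates (w : 'I_n -> R) (v : 'I_d -> 'I_n -> R)
  (y x : {ffun 'I_n -> bool}) : bool :=
  [&& dotb w y <= dotb w x,
      [forall i, dotb (v i) x <= dotb (v i) y] &
      (dotb w y < dotb w x) || [exists i, dotb (v i) x < dotb (v i) y]].

Definition pareto_optimal (w : 'I_n -> R) (v : 'I_d -> 'I_n -> R)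
  (x : {ffun 'I_n -> bool}) : bool :=
  [forall y, ~~ dominates w v y x].

Definition num_pareto (w : 'I_n -> R) (v : 'I_d -> 'I_n -> R) : nat :=
  #|[set x | pareto_optimal w v x]|.

End knapsack.

Definition mutually_independent (disp : measure_display) (T : measurableType disp)
  (R : realType) (P : probability T R) (I : finType) (X : I -> {RV P >-> R}) : Prop :=
  forall (S : {set I}) (B : I -> set R), (forall i, measurable (B i)) ->
    P (\big[setI/setT]_(i in S) (X i @^-1` B i)) =
    (\prod_(i in S) P (X i @^-1` B i))%E.

(* Split the [n] items into [d] blocks of [m = n %/ d] items and pick one item
   in each block, in one of [m ^ d] ways.  With a probability [box_prob] that
   depends on [d] only, the [d x d] matrix of profits of the picked items has
   diagonal entries at least [1/2] and off-diagonal entries in [[0, 1/(8 d)]].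
   Such a matrix is strictly diagonally dominant, so there is a positive [l] with
   [sum_k l_k v^(k)_j = 1] on every picked item [j]; taking the picked items and
   all items of larger [l]-score maximizes [sum_k l_k v^(k).x - w.x], hence is
   Pareto optimal, and distinct good picks give distinct solutions.  So the
   expected number of Pareto-optimal solutions is at least [box_prob * m ^ d],
   of order [n ^ d], which dominates [n ^ (d - 3/2)]. *)

From HB Require Import structures.
From mathcomp Require Import all_boot all_order all_algebra.
From mathcomp Require Import all_classical all_reals all_analysis.
From mathcomp Require Import zify ring lra measurable_realfun.
Import Order.TTheory GRing.Theory Num.Theory.
Local Open Scope classical_set_scope.
Local Open Scope ring_scope.
Set Implicit Arguments. Unset Strict Implicit. Unset Printing Implicit Defensive.

Section BoxMatrix.
Variables (R : realFieldType) (d : nat).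
Implicit Types (A : 'M[R]_d) (x : 'rV[R]_d).

Definition boxmx A : bool :=
  [forall i, 1/2 <= A i i] &&
  [forall i, forall k, (i != k) ==> (0 <= A i k <= (8 * d%:R)^-1)].

Lemma boxmx_diag A i : boxmx A -> 1/2 <= A i i.
Proof. by case/andP=> /forallP. Qed.

Lemma boxmx_offdiag A i k : boxmx A -> i != k -> 0 <= A i k <= (8 * d%:R)^-1.
Proof. by case/andP=> _ /forallP/(_ i)/forallP/(_ k)/implyP. Qed.

Lemma boxmx_tr A : boxmx A -> boxmx A^T.
Proof.
move=> hA; apply/andP; split; apply/forallP=> i; rewrite ?mxE ?boxmx_diag //.
by apply/forallP=> k; apply/implyP=> ik; rewrite mxE boxmx_offdiag // eq_sym.
Qed.

Lemma boxmx_offdiag_sum A x k m : boxmx A -> (forall i, `|x 0 i| <= `|x 0 m|) ->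
  `|\sum_(i | i != k) x 0 i * A i k| <= `|x 0 m| / 8.
Proof.
move=> hA hm; have d0 : d%:R != 0 :> R by rewrite pnatr_eq0 -lt0n; case: (d) k => [[]|].
apply: le_trans (ler_norm_sum _ _ _) _.
apply: (@le_trans _ _ (\sum_(i < d) `|x 0 m| * (8 * d%:R)^-1)); last first.
  by rewrite sumr_const card_ord -mulr_natr le_eqVlt; apply/orP; left; apply/eqP; field.
rewrite [leRHS](bigID (fun i => i != k)) /= -[leLHS]addr0.
apply: lerD; last by apply: sumr_ge0 => i _; rewrite mulr_ge0 ?invr_ge0 ?mulr_ge0.
apply: ler_sum => i ik; rewrite normrM; apply: ler_pM => //.
by case/andP: (boxmx_offdiag hA ik) => a0 a1; rewrite ger0_norm.
Qed.

Lemma boxmx_max_entry A x m : boxmx A -> (forall i, `|x 0 i| <= `|x 0 m|) ->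
  `|x 0 m| / 2 <= `|(x *m A) 0 m| + `|x 0 m| / 8.
Proof.
move=> hA hm.
have diag : `|x 0 m| / 2 <= `|x 0 m * A m m|.
  by rewrite normrM ler_wpM2l // -div1r (le_trans (boxmx_diag m hA)) ?ler_norm.
have split : x 0 m * A m m = (x *m A) 0 m - \sum_(i | i != m) x 0 i * A i m.
  by rewrite mxE (bigD1 m) //= addrK.
rewrite split in diag.
apply: le_trans diag (le_trans (ler_normB _ _) _).
by rewrite lerD2l boxmx_offdiag_sum.
Qed.

Lemma exists_max_norm_entry x (i0 : 'I_d) : exists m, forall i, `|x 0 i| <= `|x 0 m|.
Proof. by exists [arg max_(i > i0) `|x 0 i|]%O; case: arg_maxP => // m _ max_m i; apply: max_m. Qed.

Lemma boxmx_mulmx_eq0 A x : boxmx A -> x *m A = 0 -> x = 0.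
Proof.
move=> hA hx; apply/rowP => i; rewrite mxE.
have [m hm] := exists_max_norm_entry x i.
have := boxmx_max_entry hA hm; rewrite hx mxE normr0 add0r => h.
by apply/eqP; rewrite -normr_le0 (le_trans (hm i)) //; lra.
Qed.

Lemma boxmx_unit A : boxmx A -> A \in unitmx.
Proof.
by move=> hA; rewrite -row_free_unit; apply: inj_row_free => x /(boxmx_mulmx_eq0 hA).
Qed.

Lemma boxmx_mulmx_const1_gt0 A x i : boxmx A -> x *m A = const_mx 1 -> 0 < x 0 i.
Proof.
move=> hA hx; have [m hm] := exists_max_norm_entry x i.
have := boxmx_max_entry hA hm; rewrite hx mxE normr1 => xm_small.
have := boxmx_offdiag_sum i hA hm; set s := \sum_(k | k != i) _ => s_small.
have row_i : x 0 i * A i i = 1 - s.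
  by have := congr1 (fun y : 'rV_d => y 0 i) hx; rewrite /= !mxE (bigD1 i) //= => <-; rewrite addrK.
have Aii_gt0 : 0 < A i i by apply: lt_le_trans (boxmx_diag i hA); lra.
by rewrite -(pmulr_lgt0 _ Aii_gt0) row_i; have := ler_norm s; lra.
Qed.

End BoxMatrix.

Section Scalarization.
Variables (R : realType) (d n : nat) (w : 'I_n -> R) (v : 'I_d -> 'I_n -> R).
Implicit Types (l : 'I_d -> R) (x y : {ffun 'I_n -> bool}).

Definition scalarize l x := \sum_(k < d) l k * dotb (v k) x - dotb w x.

Definition score l j := \sum_(k < d) l k * v k j.

Lemma scalarizeE l x : scalarize l x = \sum_(j < n) (x j)%:R * (score l j - w j).
Proof.
rewrite /scalarize /dotb /score; under eq_bigr do rewrite mulr_sumr.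
rewrite exchange_big /= -sumrB; apply: eq_bigr => j _.
rewrite mulrBr mulr_sumr; congr (_ - _); last by rewrite mulrC.
by apply: eq_bigr => k _; rewrite mulrA mulrC.
Qed.

Lemma scalarize_max_pareto_optimal l x : (forall k, 0 < l k) ->
  (forall y, scalarize l y <= scalarize l x) -> pareto_optimal w v x.
Proof.
move=> l_gt0 x_max; apply/forallP => y; apply/negP => /and3P[wy /forallP vy strict].
suff : scalarize l x < scalarize l y by rewrite ltNge x_max.
have profit k : l k * dotb (v k) x <= l k * dotb (v k) y by rewrite ler_pM2l.
case/orP: strict => [wy_lt|/existsP[i vi_lt]]; first by apply: ler_ltB => //; apply: ler_sum.
apply: ltr_leB => //; rewrite [ltRHS](bigD1 i) //= [ltLHS](bigD1 i) //=.
by apply: ltr_leD; [rewrite ltr_pM2l | apply: ler_sum].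
Qed.

Lemma threshold_scalarize_max l x y :
  (forall j, w j < score l j -> x j) -> (forall j, score l j < w j -> ~~ x j) ->
  scalarize l y <= scalarize l x.
Proof.
move=> take skip; rewrite !scalarizeE; apply: ler_sum => j _.
case: (ltrgtP (score l j) (w j)) => [lt|gt|->]; last by rewrite subrr !mulr0.
- by rewrite (negbTE (skip _ lt)) mul0r; case: (y j); rewrite ?mul1r ?mul0r // subr_le0 ltW.
- by rewrite take // mul1r; case: (y j); rewrite ?mul1r ?mul0r // subr_ge0 ltW.
Qed.

End Scalarization.

Section Candidates.
Variables (R : realType) (d n : nat) (v : 'I_d -> 'I_n -> R).
Variables (I : finType) (J : I -> 'I_d -> 'I_n).
Hypothesis J_inj : forall r r', codom (J r) =i codom (J r') -> r = r'.

Definition profit_mx r : 'M[R]_d := \matrix_(i, k) v k (J r i).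
Definition normal_vec r : 'rV[R]_d := const_mx 1 *m invmx (profit_mx r)^T.
Definition coef1 r : 'rV[R]_d := const_mx 1 *m invmx (profit_mx r).
Definition normal_score r j := score v (fun k => normal_vec r 0 k) j.
Definition candidate r : {ffun 'I_n -> bool} :=
  [ffun j => (1 < normal_score r j) || (j \in codom (J r))].

Section BoxCandidate.
Variable r : I.
Hypothesis box_r : boxmx (profit_mx r).

Lemma normal_vecE : normal_vec r *m (profit_mx r)^T = const_mx 1.
Proof. by rewrite mulmxKV // boxmx_unit // boxmx_tr. Qed.

Lemma coef1E : coef1 r *m profit_mx r = const_mx 1.
Proof. by rewrite mulmxKV // boxmx_unit. Qed.

Lemma normal_score_chosen i : normal_score r (J r i) = 1.
Proof.
have := congr1 (fun y : 'rV_d => y 0 i) normal_vecE; rewrite /= !mxE => <-.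
by apply: eq_bigr => k _; rewrite !mxE.
Qed.

Lemma normal_vec_gt0 k : 0 < normal_vec r 0 k.
Proof. exact: boxmx_mulmx_const1_gt0 (boxmx_tr box_r) normal_vecE. Qed.

Lemma coef1_gt0 i : 0 < coef1 r 0 i.
Proof. exact: boxmx_mulmx_const1_gt0 box_r coef1E. Qed.

Lemma candidate_pareto_optimal : pareto_optimal (fun _ => 1) v (candidate r).
Proof.
apply: (scalarize_max_pareto_optimal normal_vec_gt0) => y.
apply: threshold_scalarize_max => j lt_j; rewrite ffunE; first by rewrite lt_j.
rewrite negb_or -leNgt ltW //=; apply/negP => /codomP[i j_i].
by move: lt_j; rewrite j_i -/(normal_score r (J r i)) normal_score_chosen ltxx.
Qed.

Lemma mem_codom_candidate j :
  (j \in codom (J r)) = candidate r j && ~~ (1 < normal_score r j).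
Proof.
rewrite ffunE; case: (boolP (j \in codom (J r))) => [/codomP[i ->]|_].
  by rewrite normal_score_chosen ltxx orbT.
by rewrite orbF andbN.
Qed.

End BoxCandidate.

Lemma sum_normal_vecB r r' : boxmx (profit_mx r) ->
  \sum_(k < d) (normal_vec r' 0 k - normal_vec r 0 k) =
  \sum_(i < d) coef1 r 0 i * (normal_score r' (J r i) - 1).
Proof.
move=> box_r.
transitivity (\sum_(k < d) (normal_vec r' 0 k - normal_vec r 0 k) * (coef1 r *m profit_mx r) 0 k).
  by apply: eq_bigr => k _; rewrite coef1E // [X in _ * X]mxE mulr1.
under eq_bigr do rewrite [X in _ * X]mxE mulr_sumr.
rewrite exchange_big /=; apply: eq_bigr => i _.
rewrite -(normal_score_chosen box_r i) /normal_score /score -sumrB mulr_sumr.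
by apply: eq_bigr => k _; rewrite [profit_mx r i k]mxE; ring.
Qed.

Lemma candidate_normal_score_ge1 r r' i : boxmx (profit_mx r') ->
  candidate r = candidate r' -> 1 <= normal_score r' (J r i).
Proof.
move=> box_r' eq_rr'; have : candidate r (J r i) by rewrite ffunE codom_f orbT.
rewrite eq_rr' ffunE => /orP[/ltW //|/codomP[i' ->]].
by rewrite normal_score_chosen.
Qed.

(* The positive vectors [coef1] turn the inequalities
   [normal_score r' (J r i) >= 1] and [normal_score r (J r' i) >= 1] into two
   opposite inequalities between the sums of the entries of the normal vectors. *)
Lemma candidate_normal_vec_eq r r' : boxmx (profit_mx r) -> boxmx (profit_mx r') ->
  candidate r = candidate r' -> normal_vec r' = normal_vec r.
Proof.
move=> box_r box_r' eq_rr'.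
have term_ge0 s s' i : boxmx (profit_mx s) -> boxmx (profit_mx s') ->
    candidate s = candidate s' -> 0 <= coef1 s 0 i * (normal_score s' (J s i) - 1).
  move=> box_s box_s' eq_ss'; rewrite mulr_ge0 ?subr_ge0 ?(ltW (coef1_gt0 _ _)) //.
  exact: candidate_normal_score_ge1 eq_ss'.
have sum_ge0 : 0 <= \sum_(k < d) (normal_vec r' 0 k - normal_vec r 0 k).
  by rewrite sum_normal_vecB //; apply: sumr_ge0 => i _; apply: term_ge0.
have sum_le0 : \sum_(k < d) (normal_vec r' 0 k - normal_vec r 0 k) <= 0.
  rewrite -oppr_ge0 -sumrN; under eq_bigr do rewrite opprB.
  by rewrite sum_normal_vecB //; apply: sumr_ge0 => i _; apply: term_ge0 (esym eq_rr').
have sum_eq0 : \sum_(k < d) (normal_vec r' 0 k - normal_vec r 0 k) = 0.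
  by apply/eqP; rewrite eq_le sum_le0 sum_ge0.
rewrite sum_normal_vecB // in sum_eq0.
have chosen_r' i : normal_score r' (J r i) = 1.
  have /eqP := @psumr_eq0P _ _ _ _ (fun i _ => term_ge0 r r' i box_r box_r' eq_rr') sum_eq0 i isT.
  by rewrite mulf_eq0 gt_eqF ?coef1_gt0 //= subr_eq0 => /eqP.
apply/eqP; rewrite -subr_eq0; apply/eqP/(boxmx_mulmx_eq0 (boxmx_tr box_r)).
apply/rowP => i; rewrite !mxE.
transitivity (normal_score r' (J r i) - normal_score r (J r i)).
  by rewrite /normal_score /score -sumrB; apply: eq_bigr => k _; rewrite !mxE; ring.
by rewrite chosen_r' normal_score_chosen // subrr.
Qed.

Lemma candidate_inj r r' : boxmx (profit_mx r) -> boxmx (profit_mx r') ->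
  candidate r = candidate r' -> r = r'.
Proof.
move=> box_r box_r' eq_rr'; apply: J_inj => j.
rewrite (mem_codom_candidate box_r) (mem_codom_candidate box_r') eq_rr'.
by rewrite /normal_score (candidate_normal_vec_eq box_r box_r' eq_rr').
Qed.

Lemma card_boxmx_le_num_pareto :
  (#|[set r | boxmx (profit_mx r)]%SET| <= num_pareto (fun _ : 'I_n => 1%R) v)%N.
Proof.
rewrite /num_pareto -(@card_in_imset _ _ candidate); last first.
  by move=> r r'; rewrite !inE; apply: candidate_inj.
apply/subset_leq_card/fintype.subsetP => x /finset.imsetP[r]; rewrite inE => box_r ->.
by rewrite inE; apply: candidate_pareto_optimal.
Qed.

End Candidates.

Section BlockPick.
Variables (d m n : nat) (hm : (d * m <= n)%N).

Lemma block_pick_lt (r : {ffun 'I_d -> 'I_m}) (i : 'I_d) : (i * m + r i < n)%N.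
Proof. have := ltn_ord (r i); have := ltn_ord i; nia. Qed.

Definition block_pick r i : 'I_n := Ordinal (block_pick_lt r i).

Lemma block_pick_eq r r' i i' : block_pick r i = block_pick r' i' -> i = i' /\ r i = r' i'.
Proof.
move=> /(congr1 val) /= eq_ri.
have m_gt0 : (0 < m)%N by case: (r i) => k /= /(leq_ltn_trans (leq0n k)).
have eq_r : r i = r' i' :> nat.
  by have := congr1 (modn^~ m) eq_ri; rewrite /= !modnMDl !modn_small.
split; last exact: val_inj.
by apply: val_inj; move: eq_ri; rewrite eq_r => /eqP; rewrite eqn_add2r eqn_pmul2r // => /eqP.
Qed.

Lemma block_pick_codom_inj r r' : codom (block_pick r) =i codom (block_pick r') -> r = r'.
Proof.
move=> eq_codom; apply/ffunP => i.
have : block_pick r i \in codom (block_pick r') by rewrite -eq_codom codom_f.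
by case/codomP => i' /block_pick_eq[<-].
Qed.

End BlockPick.

Lemma mutually_independent_inj (disp : measure_display) (T : measurableType disp)
  (R : realType) (P : probability T R) (I K : finType) (X : I -> {RV P >-> R})
  (g : K -> I) (B : K -> set R) :
  mutually_independent X -> injective g -> (forall p, measurable (B p)) ->
  P (\big[setI/setT]_p (X (g p) @^-1` B p)) = (\prod_p P (X (g p) @^-1` B p))%E.
Proof.
move=> indep g_inj mB.
pose B' q := if [pick p | g p == q] is Some p then B p else setT.
have B'g p : B' (g p) = B p.
  by rewrite /B'; case: pickP => [p' /eqP/g_inj -> //|/(_ p)]; rewrite eqxx.
have mB' q : measurable (B' q) by rewrite /B'; case: pickP.
have := indep (g @: finset.setT) B' mB'.
rewrite !big_imset /=; try by move=> p p' _ _ /g_inj.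
under eq_bigl do rewrite finset.in_setT; under [in RHS]eq_bigl do rewrite finset.in_setT.
by under eq_bigr do rewrite B'g; under [in RHS]eq_bigr do rewrite B'g.
Qed.

Lemma uniform_prob_itv (R : realType) (a b : R) : 0 <= a -> a <= b -> b <= 1 ->
  uniform_prob (@ltr01 R) `[a, b] = (b - a)%:E.
Proof.
move=> a0 ab b1; rewrite /uniform_prob (eq_integral (fun=> 1%:E)); last first.
  move=> x; rewrite inE/= in_itv/= => /andP[ax xb].
  by rewrite /uniform_pdf (le_trans a0 ax) (le_trans xb b1) subr0 invr1.
rewrite integral_cst //= mul1e lebesgue_measure_itv /= lte_fin.
by case: ltgtP ab => // -> _; rewrite subrr.
Qed.

Section BoxInterval.
Variables (R : realType) (d : nat).

Definition box_lo (p : 'I_d * 'I_d) : R := if p.1 == p.2 then 1/2 else 0.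
Definition box_hi (p : 'I_d * 'I_d) : R := if p.1 == p.2 then 1 else (8 * d%:R)^-1.
Definition box_prob : R := \prod_(p : 'I_d * 'I_d) (box_hi p - box_lo p).

Lemma box_lo_hi p : [/\ 0 <= box_lo p, box_lo p < box_hi p & box_hi p <= 1].
Proof.
have d_ge1 : 1 <= d%:R :> R.
  by rewrite ler1n; case: p => -[k k_lt_d] _; apply: leq_ltn_trans (leq0n k) k_lt_d.
have inv_gt0 : 0 < (8 * d%:R :> R)^-1 by rewrite invr_gt0; lra.
have inv_le1 : (8 * d%:R :> R)^-1 <= 1 by rewrite invf_le1; lra.
by rewrite /box_lo /box_hi; case: ifP => _; split => //; lra.
Qed.

Lemma box_prob_gt0 : 0 < box_prob.
Proof. by apply: prodr_gt0 => p _; rewrite subr_gt0; case: (box_lo_hi p). Qed.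

End BoxInterval.

(* No measurability is needed: the integral of a nonnegative function is the
   supremum of the integrals of the simple functions below it. *)
Lemma ge0_le_integralT (disp : measure_display) (T : measurableType disp) (R : realType)
  (mu : {measure set T -> \bar R}) (f g : T -> \bar R) :
  (forall x, (0 <= g x)%E) -> (forall x, (g x <= f x)%E) ->
  (\int[mu]_x g x <= \int[mu]_x f x)%E.
Proof.
move=> g_ge0 le_gf; have f_ge0 x : (0 <= f x)%E := le_trans (g_ge0 x) (le_gf x).
rewrite (ge0_integralTE mu g_ge0) (ge0_integralTE mu f_ge0).
apply: ge_ereal_sup => _ [h le_hg <-]; apply: ereal_sup_ubound; exists h => //.
by move=> x; apply: le_trans (le_hg x) (le_gf x).
Qed.

Section BoxEvent.
Variables (R : realType) (d m n : nat) (hm : (d * m <= n)%N).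
Variables (disp : measure_display) (T : measurableType disp) (P : probability T R)
  (V : 'I_d -> 'I_n -> {RV P >-> R}).
Hypothesis indep : mutually_independent (fun ij : 'I_d * 'I_n => V ij.1 ij.2).
Hypothesis unif : forall i j, distribution P (V i j) = uniform_prob (@ltr01 R).

Definition box_event (r : {ffun 'I_d -> 'I_m}) : set T :=
  \big[setI/setT]_(p : 'I_d * 'I_d) (V p.2 (block_pick hm r p.1) @^-1` `[box_lo R p, box_hi R p]).

Lemma box_event_measurable r : measurable (box_event r).
Proof.
by apply: bigsetI_measurable => p _; apply: measurable_funPTI; apply: measurable_itv.
Qed.

Lemma box_event_prob r : P (box_event r) = (box_prob R d)%:E.
Proof.
pose g (p : 'I_d * 'I_d) : 'I_d * 'I_n := (p.2, block_pick hm r p.1).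
have g_inj : injective g.
  move=> [i k] [i' k'] [/= -> eq_ri].
  by have /block_pick_eq[-> _] : block_pick hm r i = block_pick hm r i' by apply: val_inj.
rewrite /box_event (mutually_independent_inj (g := g) indep g_inj) /=; last first.
  by move=> p; apply: measurable_itv.
transitivity (\prod_(p : 'I_d * 'I_d) (box_hi R p - box_lo R p)%:E)%E; last by rewrite prodEFin.
apply: eq_bigr => p _.
have [lo_ge0 lo_lt_hi hi_le1] := box_lo_hi R p.
by rewrite -(uniform_prob_itv lo_ge0 (ltW lo_lt_hi) hi_le1) -(unif p.2 (block_pick hm r p.1)).
Qed.

Lemma box_event_boxmx r t : box_event r t ->
  boxmx (profit_mx (fun k j => V k j t) (block_pick hm) r).
Proof.
rewrite /box_event -bigcap_seq => in_box.
have entry p : box_lo R p <= V p.2 (block_pick hm r p.1) t <= box_hi R p.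
  by have := in_box p (mem_index_enum p); rewrite /= in_itv.
apply/andP; split; apply/forallP => i.
  by rewrite mxE; have := entry (i, i); rewrite /box_lo /box_hi /= eqxx => /andP[].
apply/forallP => k; apply/implyP => ik; rewrite mxE.
by have := entry (i, k); rewrite /box_lo /box_hi /= (negbTE ik).
Qed.

Lemma expectation_num_pareto_ge :
  (((m ^ d)%:R * box_prob R d)%:E <=
    'E_P[fun t => (num_pareto (fun _ : 'I_n => 1%R) (fun i j => V i j t))%:R])%E.
Proof.
have sum_prob : (\sum_r P (box_event r) = \int[P]_t \sum_r (\1_(box_event r) t)%:E)%E.
  rewrite ge0_integral_sum //.
    by apply: eq_bigr => r _; rewrite integral_indic ?setIT //; apply: box_event_measurable.
  by move=> r; apply/measurable_EFinP/measurable_indic/box_event_measurable.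
have -> : ((m ^ d)%:R * box_prob R d)%:E = (\sum_r P (box_event r))%E.
  under eq_bigr do rewrite box_event_prob.
  by rewrite sumEFin sumr_const card_ffun !card_ord mulr_natl.
rewrite sum_prob expectation.unlock; apply: ge0_le_integralT => t.
  by apply: sume_ge0 => r _; rewrite lee_fin indicE ler0n.
rewrite sumEFin lee_fin.
pose box r := boxmx (profit_mx (fun k j => V k j t) (block_pick hm) r).
apply: (@le_trans _ _ (\sum_r (box r : nat)%:R)).
  apply: ler_sum => r _; rewrite indicE.
  case: (boolP (t \in box_event r)) => [/set_mem/box_event_boxmx box_r|_]; last by rewrite ler0n.
  by rewrite /box box_r.
rewrite -natr_sum ler_nat.
apply: leq_trans (card_boxmx_le_num_pareto _ (@block_pick_codom_inj _ _ _ hm)).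
rewrite -sum1_card [leqRHS]big_mkcond /=.
by apply/eq_leq/eq_bigr => r _; rewrite inE.
Qed.

End BoxEvent.

Lemma powR_le_block_count (R : realType) (d m n : nat) :
  (0 < n)%N -> (n <= 2 * d * m)%N ->
  n%:R `^ (d%:R - 3 / 2) <= (2 * d%:R) ^+ d * (m ^ d)%:R :> R.
Proof.
move=> n_gt0 le_n; have n_ge1 : 1 <= n%:R :> R by rewrite ler1n.
apply: (@le_trans _ _ (n%:R ^+ d)).
  by rewrite -powR_mulrn ?ler_powR ?gerBl // ler0n.
rewrite natrX -exprMn lerXn2r ?nnegrE ?mulr_ge0 ?ler0n //.
by rewrite -natrM -natrM ler_nat.
Qed.

Theorem theorem3 (R : realType) (d : nat) (hd : (1 <= d)%N) :
  exists c : R, 0 < c /\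
  exists N : nat, forall n : nat, (N <= n)%N ->
  forall (disp : measure_display) (T : measurableType disp)
         (P : probability T R) (V : 'I_d -> 'I_n -> {RV P >-> R}),
    mutually_independent (fun ij : 'I_d * 'I_n => V ij.1 ij.2) ->
    (forall i j, distribution P (V i j) = uniform_prob (@ltr01 R)) ->
    ((c * (n%:R `^ (d%:R - 3 / 2)))%:E <=
      'E_P[fun t => (num_pareto (fun _ : 'I_n => 1%R) (fun i j => V i j t))%:R%R])%E.
Proof.
have q_gt0 : 0 < (2 * d%:R) ^+ d :> R by rewrite exprn_gt0 // mulr_gt0 // ltr0n.
exists (box_prob R d / (2 * d%:R) ^+ d); split; first by rewrite divr_gt0 ?box_prob_gt0.
exists (2 * d)%N => n le_2d_n disp T P V indep unif.
have hm : (d * (n %/ d) <= n)%N by rewrite mulnC leq_divM.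
have le_n : (n <= 2 * d * (n %/ d))%N.
  by have := divn_eq n d; have := ltn_pmod n hd; nia.
have n_gt0 : (0 < n)%N by apply: leq_trans le_2d_n; rewrite muln_gt0.
apply: le_trans (expectation_num_pareto_ge hm indep unif); rewrite lee_fin.
apply: (@le_trans _ _ (box_prob R d / (2 * d%:R) ^+ d * ((2 * d%:R) ^+ d * ((n %/ d) ^ d)%:R))).
  apply: ler_wpM2l; last exact: powR_le_block_count.
  by rewrite divr_ge0 ?ltW // box_prob_gt0.
by rewrite mulrA divfK ?gt_eqF // mulrC.
Qed.
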